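(* Let $\Gamma$ be a $(d+1)$-vertex-connected graph with at least $d+1$ vertices, and let $(q,\Gamma)$ be a framework in $\mathbb{R}^d$ with the convex containment property. Then there is a non-symmetric equilibrium stress matrix $\Omega$ of $(q,\Gamma)$ with co-rank $d+1$ (i.e., $\dim\ker\Omega=d+1$).
   Context: A framework $(q,\Gamma)$ in $\mathbb{R}^d$ has the convex containment property if (1) for each vertex, the positions of its neighbors have affine span of dimension $d$, and (2) there is a set of $d+1$ exceptional vertices such that every other vertex $i$ has $q(i)$ in the interior of the convex hull of the positions of its neighbors. A non-symmetric equilibrium stress matrix of $(q,\Gamma)$ is a real matrix $\Omega$ indexed by $V\times V$ with $\Omega(u,w)=0$ whenever $u\ne w$ and $\{u,w\}$ is not an edge, $\sum_w\Omega(u,w)=0$ for all $u$, and $\sum_w\Omega(u,w)q(w)=0$ for all $u$. *)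

From HB Require Import structures.
From mathcomp Require Import all_boot all_order all_algebra.
From mathcomp Require Import reals.
Set Implicit Arguments. Unset Strict Implicit. Unset Printing Implicit Defensive.
Import Order.TTheory GRing.Theory Num.Theory.
Local Open Scope ring_scope.

Definition simple_graph (n : nat) (G : rel 'I_n) : Prop :=
  irreflexive G /\ symmetric G.

Definition vertex_connected (n k : nat) (G : rel 'I_n) : Prop :=
  forall S : {set 'I_n}, (#|S| < k)%N ->
    forall u v, u \notin S -> v \notin S ->
      connect [rel x y | [&& G x y, x \notin S & y \notin S]] u v.

(* Its rank is 1 + dim of the affine
   span of the neighbours' positions (with dim of the empty set = -1). *)
Definition nbr_homog (R : realType) (n d : nat) (G : rel 'I_n)
    (q : 'I_n -> 'rV[R]_d) (i : 'I_n) : 'M[R]_(n, d + 1) :=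
  \matrix_(w < n) (if G i w then row_mx (q w) (1 : 'rV[R]_1) else 0).

Definition nbrs_affinely_spanning (R : realType) (n d : nat) (G : rel 'I_n)
    (q : 'I_n -> 'rV[R]_d) (i : 'I_n) : Prop :=
  \rank (nbr_homog G q i) = d.+1.

Definition in_nbr_hull (R : realType) (n d : nat) (G : rel 'I_n)
    (q : 'I_n -> 'rV[R]_d) (i : 'I_n) (y : 'rV[R]_d) : Prop :=
  exists lam : 'I_n -> R,
    [/\ forall w, 0 <= lam w,
        forall w, ~~ G i w -> lam w = 0,
        \sum_w lam w = 1 &
        y = \sum_w lam w *: q w].

Definition in_nbr_hull_interior (R : realType) (n d : nat) (G : rel 'I_n)
    (q : 'I_n -> 'rV[R]_d) (i : 'I_n) (x : 'rV[R]_d) : Prop :=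
  exists2 e : R, 0 < e &
    forall y : 'rV[R]_d, (forall j, `|y 0 j - x 0 j| < e) -> in_nbr_hull G q i y.

Definition convex_containment (R : realType) (n d : nat) (G : rel 'I_n)
    (q : 'I_n -> 'rV[R]_d) : Prop :=
  (forall i, nbrs_affinely_spanning G q i) /\
  exists X : {set 'I_n}, #|X| = d.+1 /\
    forall i, i \notin X -> in_nbr_hull_interior G q i (q i).

Definition nonsym_equilibrium_stress (R : realType) (n d : nat) (G : rel 'I_n)
    (q : 'I_n -> 'rV[R]_d) (Om : 'M[R]_n) : Prop :=
  [/\ forall u w, u != w -> ~~ G u w -> Om u w = 0,
      forall u, \sum_w Om u w = 0 &
      forall u, \sum_w Om u w *: q w = 0].

(* A non-exceptional vertex i lies in the interior of the convex hull of its
   neighbours, so q i is a convex combination of the neighbours' positions with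
   a strictly positive weight on every neighbour.  Taking row i of the stress to
   be these weights minus the unit vector e_i, and zero rows on the d+1
   exceptional vertices X, gives an equilibrium stress of rank at most
   n - (d+1).  A kernel vector that vanishes on X is harmonic for the weights,
   hence zero by the maximum principle on the connected graph; so the kernel
   embeds in R^X and the rank is exactly n - (d+1). *)

From HB Require Import structures.
From mathcomp Require Import all_boot all_order all_algebra.
From mathcomp Require Import reals lra.
Set Implicit Arguments. Unset Strict Implicit. Unset Printing Implicit Defensive.
Import Order.TTheory GRing.Theory Num.Theory.
Local Open Scope ring_scope.

Lemma connect_invariant (T : finType) (e : rel T) (P : pred T) :
  (forall x y, e x y -> P x -> P y) -> forall x y, connect e x y -> P x -> P y.
Proof.
move=> Pe x _ /connectP[p e_p ->].
elim: p x e_p => //= y p IHp x /andP[e_xy e_p] Px; exact: IHp e_p (Pe _ _ e_xy Px).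
Qed.

Section HarmonicMaxPrinciple.
Variables (R : realDomainType) (n : nat) (G : rel 'I_n) (X : {set 'I_n}).
Variables (lam : 'I_n -> 'I_n -> R) (v : 'I_n -> R).
Hypothesis lam_ge0 : forall i j, i \notin X -> 0 <= lam i j.
Hypothesis lam_sum1 : forall i, i \notin X -> \sum_j lam i j = 1.
Hypothesis lam_gt0 : forall i j, i \notin X -> G i j -> 0 < lam i j.
Hypothesis v_harmonic : forall i, i \notin X -> v i = \sum_j lam i j * v j.
Hypothesis v_boundary : forall x, x \in X -> v x = 0.

Lemma harmonic_norm_max_succ {i j} :
  (forall k, `|v k| <= `|v i|) -> G i j -> `|v j| = `|v i|.
Proof.
move=> i_max Gij; have [iX | iX] := boolP (i \in X).
  by apply/eqP; rewrite eq_le i_max v_boundary // normr0 normr_ge0.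
have slack0 : \sum_k lam i k * (`|v i| - `|v k|) = 0.
  rewrite (eq_bigr _ (fun k _ => mulrBr _ _ _)) sumrB -mulr_suml lam_sum1 // mul1r.
  apply/eqP; rewrite subr_eq0 eq_le; apply/andP; split.
    rewrite {1}v_harmonic //; apply: le_trans (ler_norm_sum _ _ _) _.
    by apply: ler_sum => k _; rewrite normrM ger0_norm ?lam_ge0.
  rewrite -[leRHS]mul1r -(lam_sum1 iX) mulr_suml.
  by apply: ler_sum => k _; rewrite ler_wpM2l ?lam_ge0.
have /eqP : lam i j * (`|v i| - `|v j|) = 0.
  by apply: (psumr_eq0P _ slack0) => // k _; rewrite mulr_ge0 ?lam_ge0 ?subr_ge0.
by rewrite mulf_eq0 (gt_eqF (lam_gt0 iX Gij)) subr_eq0 => /eqP.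
Qed.

Lemma harmonic_eq0 :
  (forall u, exists2 x, x \in X & connect G u x) -> forall i, v i = 0.
Proof.
move=> reach_X i.
pose i0 := [arg max_(k > i) `|v k|]%O.
have i0_max : forall k, `|v k| <= `|v i0|.
  by rewrite /i0; case: arg_maxP => // k _ k_max j; apply: k_max.
have [x xX i0x] := reach_X i0.
have : `|v x| == `|v i0|.
  apply: (@connect_invariant _ G (fun y => `|v y| == `|v i0|) _ _ _ i0x) => //.
  move=> y z Gyz /eqP vy.
  have y_max : forall k, `|v k| <= `|v y| by move=> k; rewrite vy.
  by rewrite (harmonic_norm_max_succ y_max Gyz) vy.
rewrite v_boundary // normr0 eq_sym => /eqP max0.
by apply/eqP; rewrite -normr_le0 -max0.
Qed.

End HarmonicMaxPrinciple.

Section DiagSetMatrix.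
Variables (F : fieldType) (n : nat).

Definition diag_set_mx (A : {set 'I_n}) : 'M[F]_n := \sum_(j in A) delta_mx j j.

Lemma diag_set_mxE A a b : diag_set_mx A a b = ((a == b) && (a \in A))%:R.
Proof.
rewrite /diag_set_mx summxE; under eq_bigr do rewrite mxE.
have [aA | aA] := boolP (a \in A); last first.
  by rewrite andbF big1 // => j jA; case: eqP => // aj; rewrite aj jA in aA.
rewrite (bigD1 a) //= eqxx big1 ?addr0 ?andbT; first by rewrite eq_sym.
by move=> j /andP[_ /negbTE ja]; rewrite eq_sym ja.
Qed.

Lemma mul_diag_set_mx A (M : 'M[F]_n) a b :
  (diag_set_mx A *m M) a b = (a \in A)%:R * M a b.
Proof.
rewrite mxE (bigD1 a) //= diag_set_mxE eqxx big1 ?addr0 // => k /negbTE ak.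
by rewrite diag_set_mxE eq_sym ak mul0r.
Qed.

Lemma mxrank_diag_set_mx A : (\rank (diag_set_mx A) <= #|A|)%N.
Proof.
rewrite /diag_set_mx -sum1_card.
apply: (big_ind2 (fun (M : 'M[F]_n) k => (\rank M <= k)%N)).
- by rewrite mxrank0.
- by move=> M1 k1 M2 k2 le1 le2; exact: leq_trans (mxrank_add _ _) (leq_add le1 le2).
- by move=> j _; rewrite mxrank_delta.
Qed.

Lemma mxrank_zero_rows (M : 'M[F]_n) (X : {set 'I_n}) :
  (forall i j, i \in X -> M i j = 0) -> (\rank M <= n - #|X|)%N.
Proof.
move=> MX0; have -> : M = diag_set_mx (~: X) *m M.
  apply/matrixP => a b; rewrite mul_diag_set_mx inE.
  by have [aX | aX] := boolP (a \in X); [rewrite mul0r MX0 | rewrite mul1r].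
apply: leq_trans (mxrankM_maxl _ _) _.
have -> : (n - #|X|)%N = #|~: X| by rewrite [#|~: X|]cardsCs setCK card_ord.
exact: mxrank_diag_set_mx.
Qed.

Lemma mxrank_full_of_ker0 (A : 'M[F]_n) :
  (forall v : 'cV_n, A *m v = 0 -> v = 0) -> \rank A = n.
Proof.
move=> kerA0; apply: mxrank_unit; rewrite unitmxE unitfE -det_tr.
apply/det0P => -[v /eqP nz_v vAt0]; apply: nz_v.
by rewrite -[v]trmxK (kerA0 v^T) ?trmx0 // -[A]trmxK -trmx_mul vAt0 trmx0.
Qed.

End DiagSetMatrix.
Arguments diag_set_mx {F n} A.

Lemma sum_delta_scale (R : pzRingType) (V : lmodType R) n (u : 'I_n)
    (f : 'I_n -> V) :
  \sum_w (u == w)%:R *: f w = f u.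
Proof.
rewrite (bigD1 u) //= eqxx scale1r big1 ?addr0 // => w /negbTE.
by rewrite eq_sym => ->; rewrite scale0r.
Qed.

Lemma sum_delta_mul (R : pzRingType) n (u : 'I_n) (F : 'I_n -> R) :
  \sum_w (u == w)%:R * F w = F u.
Proof. exact: (@sum_delta_scale R R^o). Qed.

Lemma sum_delta (R : pzRingType) n (u : 'I_n) : \sum_w ((u == w)%:R : R) = 1.
Proof.
by rewrite -[RHS](sum_delta_mul u (fun=> 1)); apply: eq_bigr => w _; rewrite mulr1.
Qed.

Section NeighbourWeights.
Variables (R : realType) (n d : nat) (G : rel 'I_n) (q : 'I_n -> 'rV[R]_d).

Definition nbr_weights (i : 'I_n) (lam : 'I_n -> R) : Prop :=
  [/\ forall w, ~~ G i w -> lam w = 0,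
      forall w, G i w -> 0 < lam w,
      \sum_w lam w = 1 &
      q i = \sum_w lam w *: q w].

Lemma nbr_weights_ge0 i lam : nbr_weights i lam -> forall w, 0 <= lam w.
Proof.
by case=> lam_off lam_on _ _ w; case: (boolP (G i w)) => [/lam_on/ltW | /lam_off->].
Qed.

Lemma nbr_hull_interior_has_nbr {i x} :
  in_nbr_hull_interior G q i x -> exists w, G i w.
Proof.
case=> e e_gt0 /(_ x) [j | lam [_ lam_off lam_sum1 _]]; first by rewrite subrr normr0.
apply/existsP; apply: contraT => /existsPn no_nbr.
have : \sum_w lam w = 0 by rewrite big1 // => w _; exact: lam_off.
by rewrite lam_sum1 => /eqP; rewrite oner_eq0.
Qed.

Lemma nbr_hull_interior_shift {i x} (c : 'rV[R]_d) :
  in_nbr_hull_interior G q i x ->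
  exists2 eps, 0 < eps & in_nbr_hull G q i (x + eps *: c).
Proof.
case=> e e_gt0 ball_in_hull; pose M := \sum_j `|c 0 j|.
have M_ge0 : 0 <= M by exact: sumr_ge0.
have eps_gt0 : 0 < e / (M + 1) by rewrite divr_gt0 // ltr_wpDl.
exists (e / (M + 1)) => //; apply: ball_in_hull => j.
have cj_le : `|c 0 j| <= M by rewrite /M (bigD1 j) //= lerDl sumr_ge0.
rewrite !mxE addrAC subrr add0r normrM gtr0_norm // mulrAC ltr_pdivrMr ?ltr_wpDl //.
by rewrite ltr_pM2l //; lra.
Qed.

Lemma nbr_hull_interior_weights i :
  in_nbr_hull_interior G q i (q i) -> exists lam, nbr_weights i lam.
Proof.
move=> int_qi; have [w0 G_w0] := nbr_hull_interior_has_nbr int_qi.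
pose k : R := #|[set w | G i w]|%:R.
have k_gt0 : 0 < k by rewrite ltr0n; apply/card_gt0P; exists w0; rewrite inE.
pose u w : R := (G i w)%:R / k.
have u_sum1 : \sum_w u w = 1.
  rewrite -mulr_suml -[X in X / k](_ : k = _) ?divff ?gt_eqF //.
  rewrite /k -sum1_card natr_sum big_mkcond; apply: eq_bigr => w _.
  by rewrite inE; case: (G i w).
(* Push q i away from the barycentre b of its neighbours; then q i is a convex
   combination of that pushed point and b, and b charges every neighbour. *)
pose b := \sum_w u w *: q w.
have [eps eps_gt0 [mu [mu_ge0 mu_off mu_sum1 mu_bary]]] :=
  nbr_hull_interior_shift (q i - b) int_qi.
have eps1_neq0 : 1 + eps != 0 by rewrite gt_eqF // ltr_wpDl.
exists (fun w => (mu w + eps * u w) / (1 + eps)); split.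
- by move=> w /negbTE Gw; rewrite mu_off ?Gw // /u Gw mul0r mulr0 addr0 mul0r.
- move=> w Gw; apply: divr_gt0; last by rewrite ltr_wpDl.
  by rewrite ltr_wpDl // mulr_gt0 // /u Gw mul1r invr_gt0.
- rewrite -mulr_suml big_split /= -mulr_sumr mu_sum1 u_sum1 mulr1 divff //.
- rewrite -[LHS](scalerK eps1_neq0) scalerDl scale1r.
  under eq_bigr do rewrite mulrC -scalerA; rewrite -scaler_sumr; congr (_ *: _).
  under eq_bigr do rewrite scalerDl -scalerA.
  by rewrite big_split /= -mu_bary -scaler_sumr -/b scalerBr addrA subrK.
Qed.

End NeighbourWeights.

Section WeightStress.
Variables (R : realType) (n d : nat) (G : rel 'I_n) (q : 'I_n -> 'rV[R]_d).
Variables (X : {set 'I_n}) (lam : 'I_n -> 'I_n -> R).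
Hypothesis lam_nbr : forall i, i \notin X -> nbr_weights G q i (lam i).

Definition weight_stress : 'M[R]_n :=
  \matrix_(i, j) if i \in X then 0 else lam i j - (i == j)%:R.

Lemma weight_stress_equilibrium : nonsym_equilibrium_stress G q weight_stress.
Proof.
split=> [u w neq_uw nGuw | u | u]; have [uX | uX] := boolP (u \in X).
- by rewrite mxE uX.
- have [lam_off _ _ _] := lam_nbr uX.
  by rewrite mxE (negbTE uX) lam_off // (negbTE neq_uw) subr0.
- by rewrite big1 // => w _; rewrite mxE uX.
- have [_ _ lam_sum1 _] := lam_nbr uX.
  under eq_bigr do rewrite mxE (negbTE uX).
  by rewrite sumrB lam_sum1 sum_delta subrr.
- by rewrite big1 // => w _; rewrite mxE uX scale0r.
- have [_ _ _ lam_bary] := lam_nbr uX.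
  under eq_bigr do rewrite mxE (negbTE uX) scalerBl.
  by rewrite sumrB -lam_bary sum_delta_scale subrr.
Qed.

Lemma weight_stress_boundary_ker0 :
  (forall u, exists2 x, x \in X & connect G u x) ->
  forall v : 'cV[R]_n, (weight_stress + diag_set_mx X) *m v = 0 -> v = 0.
Proof.
move=> reach_X v /matrixP Bv0.
have Bv_row a : \sum_j (weight_stress + diag_set_mx X) a j * v j 0 = 0.
  by have := Bv0 a 0; rewrite !mxE.
have v_boundary x : x \in X -> v x 0 = 0.
  move=> xX; rewrite -(Bv_row x).
  under eq_bigr do rewrite !mxE diag_set_mxE xX andbT add0r.
  by rewrite sum_delta_mul.
have v_harmonic i : i \notin X -> v i 0 = \sum_j lam i j * v j 0.
  move=> iX; have := Bv_row i.
  under eq_bigr do rewrite !mxE diag_set_mxE (negbTE iX) andbF addr0 mulrBl.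
  by rewrite sumrB sum_delta_mul => /eqP; rewrite subr_eq0 => /eqP.
apply/colP => j; rewrite mxE.
apply: (harmonic_eq0 (v := fun k => v k 0) _ _ _ v_harmonic v_boundary reach_X).
- by move=> i k iX; apply: nbr_weights_ge0 (lam_nbr iX) k.
- by move=> i iX; have [_ _ ? _] := lam_nbr iX.
- by move=> i k iX; have [_ lam_on _ _] := lam_nbr iX; apply: lam_on.
Qed.

Lemma weight_stress_rank :
  (forall u, exists2 x, x \in X & connect G u x) ->
  \rank weight_stress = (n - #|X|)%N.
Proof.
move=> reach_X; apply/eqP; rewrite eqn_leq mxrank_zero_rows /=; last first.
  by move=> i j iX; rewrite mxE iX.
have full := mxrank_full_of_ker0 (weight_stress_boundary_ker0 reach_X).
rewrite leq_subLR addnC -[X in (X <= _)%N]full.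
by apply: leq_trans (mxrank_add _ _) _; rewrite leq_add2l mxrank_diag_set_mx.
Qed.

End WeightStress.

Theorem lemma5p8 (R : realType) (n d : nat) (G : rel 'I_n)
    (q : 'I_n -> 'rV[R]_d) :
  simple_graph G ->
  vertex_connected d.+1 G ->
  (d.+1 <= n)%N ->
  convex_containment G q ->
  exists Om : 'M[R]_n,
    nonsym_equilibrium_stress G q Om /\ (n - \rank Om)%N = d.+1.
Proof.
move=> _ conn_G le_dn [_ [X [card_X int_X]]].
have reach_X u : exists2 x, x \in X & connect G u x.
  have [x xX] : exists x, x \in X by apply/card_gt0P; rewrite card_X.
  exists x => //; have := conn_G set0 _ u x; rewrite cards0 !in_set0.
  move=> /(_ isT isT isT); apply: connect_sub => a b /andP[Gab _].
  exact: connect1.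
have /fin_all_exists[lam lam_nbr] :
    forall i, exists lam_i, i \notin X -> nbr_weights G q i lam_i.
  move=> i; have [iX | iX] := boolP (i \in X); first by exists (fun=> 0).
  by have [lam_i ?] := nbr_hull_interior_weights (int_X i iX); exists lam_i.
exists (weight_stress X lam); split; first exact: weight_stress_equilibrium.
by rewrite (weight_stress_rank lam_nbr reach_X) card_X subKn.
Qed.
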